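(* Let $g$ be a Möbius transformation of the Riemann sphere with $g(\overline{\mathbb D_1})\subset\mathbb D_1$. Then $g^\top(\overline{\mathbb D_1})\subset\mathbb D_1$.
   Context: $\mathbb D_t=\{z\in\mathbb C:|z|<t\}$. For a Möbius transformation $g(x)=\frac{ax+b}{cx+d}$ ($ad-bc\ne0$), its ''transpose'' is the Möbius transformation $g^\top(x)=\frac{ax+c}{bx+d}$. *)

From HB Require Import structures.
From mathcomp Require Import all_boot all_order all_algebra.
From mathcomp Require Import complex.
Set Implicit Arguments. Unset Strict Implicit. Unset Printing Implicit Defensive.
Import Order.TTheory GRing.Theory Num.Theory.
Local Open Scope ring_scope.
Local Open Scope complex_scope.

Definition mobius (R : rcfType) (a b c d : R[i]) (z : R[i]) : R[i] :=
  (a * z + b) / (c * z + d).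

Definition is_mobius (R : rcfType) (a b c d : R[i]) : Prop :=
  a * d - b * c != 0.

(* g(closed unit disk) ⊂ open unit disk D_1, as a map of the Riemann sphere:
   every z with |z| <= 1 is sent to a finite point (c z + d <> 0, i.e. not to
   infinity) of modulus < 1. *)
Definition maps_cdisk_into_disk (R : rcfType) (a b c d : R[i]) : Prop :=
  forall z : R[i], `|z| <= 1 ->
    c * z + d != 0 /\ `|mobius a b c d z| < 1.

From mathcomp Require Import all_boot all_order all_algebra.
From mathcomp Require Import complex.
From mathcomp Require Import ring.
Import Order.TTheory GRing.Theory Num.Theory.
Local Open Scope ring_scope.

(* Both g and g^T are governed by the form B(z, w) = a z w + b w + c z + d, which is
   symmetric under transposition: g(z) = -1/w iff B(z, w) = 0 iff g^T(w) = -1/z.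
   If |g^T(w)| >= 1 for some |w| <= 1, then z := -1/g^T(w) has |z| <= 1 and
   B(z, w) = 0, so |g(z)| = 1/|w| >= 1, contradicting g(closed disk) in D_1. *)

Lemma mobius_form_transpose (K : comPzRingType) (a b c d z w : K) :
  c * z + d + w * (a * z + b) = b * w + d + z * (a * w + c).
Proof. by ring. Qed.

Lemma norm_divf_lt1 (F : numFieldType) (x y : F) :
  y != 0 -> (`|x / y| < 1) = (`|x| < `|y|).
Proof. by move=> y0; rewrite normf_div ltr_pdivrMr ?normr_gt0 // mul1r. Qed.

Section TransposeDisk.

Variable R : rcfType.
Variables a b c d : R[i].

Lemma mobius_transpose_pair_neq0 (w : R[i]) :
  is_mobius a b c d -> a * w + c = 0 -> b * w + d != 0.
Proof.
move=> det u0; apply: contra det => /eqP v0.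
have -> : a * d - b * c = a * (b * w + d) - b * (a * w + c) by ring.
by rewrite u0 v0 !mulr0 subrr.
Qed.

Lemma mobius_transpose_num_lt_den (w : R[i]) :
  is_mobius a b c d -> maps_cdisk_into_disk a b c d -> `|w| <= 1 ->
  `|a * w + c| < `|b * w + d|.
Proof.
move=> det into w1; rewrite real_ltNge ?normr_real //; apply/negP => vu.
have u0 : a * w + c != 0.
  apply/eqP => u0; move: vu; rewrite u0 normr0 normr_le0.
  by rewrite (negbTE (mobius_transpose_pair_neq0 w det u0)).
pose z := - (b * w + d) / (a * w + c).
have z1 : `|z| <= 1 by rewrite /z normf_div normrN ler_pdivrMr ?normr_gt0 ?mul1r.
have den_z : c * z + d = - w * (a * z + b).
  apply/eqP; rewrite mulNr -addr_eq0 mobius_form_transpose.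
  by rewrite /z mulrC divfK // addrN.
have [dz0 gz1] := into z z1.
have nz0 : a * z + b != 0 by apply: contraNneq dz0 => n0; rewrite den_z n0 mulr0.
move: gz1; rewrite /mobius norm_divf_lt1 // den_z normrM normrN.
rewrite -[X in X < _]mul1r ltr_pM2r ?normr_gt0 //.
by move=> /(le_lt_trans w1); rewrite ltxx.
Qed.

End TransposeDisk.

Theorem lemma3p8 (R : rcfType) (a b c d : R[i]) :
  is_mobius a b c d ->
  maps_cdisk_into_disk a b c d ->
  maps_cdisk_into_disk a c b d.
Proof.
move=> det into w w1.
have lt : `|a * w + c| < `|b * w + d| by exact: mobius_transpose_num_lt_den.
have den0 : b * w + d != 0 by rewrite -normr_gt0 (le_lt_trans (normr_ge0 _) lt).
by split; rewrite // /mobius norm_divf_lt1.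
Qed.
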